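(* Let $0\le\alpha<1$ and let $r_0=r_0(\alpha)$ be the real root in $(0,1)$ of the equation \[2(1-\alpha)(1-r)^4=1-\alpha+4r+(1+\alpha)r^2.\] Let $\mathcal{F}$ be the class of analytic functions $f(z)=z+\sum_{n\ge2}a_nz^n$ on $\mathbb{D}$ with $|a_n|\le n$ for all $n\ge2$. Then every $f\in\mathcal{F}$ satisfies $\left|\frac{zf''(z)}{f'(z)}\right|\le1-\alpha$ for $|z|\le r_0$; $r_0(\alpha)$ is the radius of convexity of order $\alpha$ of $\mathcal{F}$; and $r_0(1/2)\approx0.064723$ is the radius of uniform convexity of $\mathcal{F}$. All results are sharp (in particular $r_0$ in the first statement cannot be replaced by any larger number).
   Context: $\mathbb{D}=\{z\in\mathbb{C}:|z|<1\}$. For a class $\mathcal{F}$ of analytic functions on $\mathbb{D}$ normalized by $f(0)=0$, $f'(0)=1$, and $0\le\alpha<1$, the radius of convexity of order $\alpha$ of $\mathcal{F}$ is the supremum of $r\in(0,1]$ such that every $f\in\mathcal{F}$ satisfies $f'(z)\ne0$ and $\operatorname{Re}\big(1+zf''(z)/f'(z)\big)>\alpha$ for $|z|<r$. The radius of uniform convexity of $\mathcal{F}$ is the supremum of $r\in(0,1]$ such that every $f\in\mathcal{F}$ satisfies $f'(z)\ne0$ and $\operatorname{Re}\big(1+zf''(z)/f'(z)\big)>\left|zf''(z)/f'(z)\right|$ for $|z|<r$. *)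

From Stdlib Require Import Reals.
From Coquelicot Require Import Coquelicot.
Open Scope R_scope.

Definition r0_eq (alpha r : R) : Prop :=
  2 * (1 - alpha) * (1 - r) ^ 4 = 1 - alpha + 4 * r + (1 + alpha) * r ^ 2.

Definition inF (f : C -> C) : Prop :=
  exists a : nat -> C,
    a 0%nat = RtoC 0 /\ a 1%nat = RtoC 1 /\
    (forall n : nat, (2 <= n)%nat -> Cmod (a n) <= INR n) /\
    (forall z : C, Cmod z < 1 ->
       @is_series C_AbsRing C_NormedModule (fun n => Cmult (a n) (Cpow z n)) (f z)).

Definition derivs (f f1 f2 : C -> C) : Prop :=
  forall z : C, Cmod z < 1 ->
    @is_derive C_AbsRing C_NormedModule f z (f1 z) /\
    @is_derive C_AbsRing C_NormedModule f1 z (f2 z).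

Definition bound_on_closed_disk (alpha r : R) : Prop :=
  forall f f1 f2 : C -> C, inF f -> derivs f f1 f2 ->
  forall z : C, Cmod z < 1 -> Cmod z <= r ->
    f1 z <> RtoC 0 /\ Cmod (Cdiv (Cmult z (f2 z)) (f1 z)) <= 1 - alpha.

Definition convex_order_in (alpha r : R) : Prop :=
  forall f f1 f2 : C -> C, inF f -> derivs f f1 f2 ->
  forall z : C, Cmod z < r ->
    f1 z <> RtoC 0 /\ Re (Cplus (RtoC 1) (Cdiv (Cmult z (f2 z)) (f1 z))) > alpha.

Definition unif_convex_in (r : R) : Prop :=
  forall f f1 f2 : C -> C, inF f -> derivs f f1 f2 ->
  forall z : C, Cmod z < r ->
    f1 z <> RtoC 0 /\
    Re (Cplus (RtoC 1) (Cdiv (Cmult z (f2 z)) (f1 z)))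
      > Cmod (Cdiv (Cmult z (f2 z)) (f1 z)).

Definition radius_convexity_order (alpha rho : R) : Prop :=
  is_lub (fun r => 0 < r <= 1 /\ convex_order_in alpha r) rho.

Definition radius_uniform_convexity (rho : R) : Prop :=
  is_lub (fun r => 0 < r <= 1 /\ unif_convex_in r) rho.

From Stdlib Require Import Reals Lra Lia Psatz ClassicalEpsilon.
From Coquelicot Require Import Coquelicot.
Open Scope R_scope.

(* For [|z| = t] the coefficient bound [|a_n| <= n] gives
   [|f'(z) - 1| <= sum_(n >= 2) n^2 t^(n-1) = (1 + t)/(1 - t)^3 - 1] and
   [|z f''(z)| <= sum_(n >= 2) n^2 (n - 1) t^(n-1) = t (4 + 2 t)/(1 - t)^4], hence
   [|z f''/f'| <= t (4 + 2 t) / (2 (1 - t)^4 - (1 + t)(1 - t))]; clearing denominators, this is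
   at most [1 - alpha] exactly when [2 (1 - alpha)(1 - t)^4 >= 1 - alpha + 4 t + (1 + alpha) t^2],
   i.e. when [t <= r0]. The function [2 z - z/(1 - z)^2] attains both majorants on the positive
   axis, which makes every radius sharp, and the convexity conditions follow from
   [Re (1 + w) >= 1 - |w|]. Termwise differentiation of complex power series rests on
   [|w^n - z^n - n (w - z) z^(n-1)| <= n^2 |w - z|^2 r^(n-2)] for [|w|, |z| <= r]. *)

Lemma INR_S_ge1 n : 1 <= INR (S n).
Proof. rewrite S_INR; pose proof (pos_INR n); lra. Qed.

Lemma is_lim_seq_succ_ratio_pow k :
  is_lim_seq (fun n => (INR (S (S n)) / INR (S n)) ^ k) 1.
Proof.
  assert (Hratio : is_lim_seq (fun n => INR (S (S n)) / INR (S n)) 1).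
  { apply is_lim_seq_ext with (fun n => 1 + / INR (S n)).
    - intro n. rewrite (S_INR (S n)). field. apply not_0_INR; lia.
    - replace (Finite 1) with (Rbar_plus 1 0) by (simpl; f_equal; ring).
      apply is_lim_seq_plus'; [apply is_lim_seq_const|].
      pose proof (proj1 (is_lim_seq_incr_1 _ _) is_lim_seq_INR) as H.
      exact (is_lim_seq_inv _ _ H ltac:(discriminate)). }
  induction k as [|k IHk].
  - apply is_lim_seq_const.
  - replace (Finite 1) with (Rbar_mult 1 1) by (simpl; f_equal; ring).
    exact (is_lim_seq_mult' _ _ _ _ Hratio IHk).
Qed.

Lemma ex_series_pow_geom k r : 0 <= r < 1 -> ex_series (fun n => INR (S n) ^ k * r ^ n).
Proof.
  intros Hr. set (s := (1 + r) / 2).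
  assert (Hs : ex_series (fun n => Rabs (INR (S n) ^ k * s ^ n))).
  { apply ex_series_DAlembert with s; [unfold s; lra| |].
    - intro n. apply Rmult_integral_contrapositive_currified; apply pow_nonzero.
      + apply not_0_INR; lia.
      + unfold s; lra.
    - apply is_lim_seq_ext with (fun n => (INR (S (S n)) / INR (S n)) ^ k * s).
      + intro n. assert (INR (S n) <> 0) by (apply not_0_INR; lia).
        assert (s ^ n <> 0) by (apply pow_nonzero; unfold s; lra).
        rewrite Rabs_pos_eq.
        * unfold Rdiv. rewrite Rpow_mult_distr, pow_inv. simpl (s ^ S n).
          field. split; auto. apply pow_nonzero; auto.
        * apply Rmult_le_pos; [apply Rmult_le_pos|];
            [apply pow_le, pos_INR|apply pow_le; unfold s; lra|].
          apply Rlt_le, Rinv_0_lt_compat, Rmult_lt_0_compat; apply pow_lt;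
            [apply lt_0_INR; lia|unfold s; lra].
      + replace (Finite s) with (Rbar_mult 1 s) by (simpl; f_equal; ring).
        apply is_lim_seq_mult'; [apply is_lim_seq_succ_ratio_pow | apply is_lim_seq_const]. }
  apply (@ex_series_le R_AbsRing R_CompleteNormedModule _ (fun n => Rabs (INR (S n) ^ k * s ^ n)));
    [|exact Hs].
  intro n. change (Rabs (INR (S n) ^ k * r ^ n) <= Rabs (INR (S n) ^ k * s ^ n)).
  rewrite !Rabs_mult, <- !RPow_abs, !(Rabs_pos_eq (INR _)) by apply pos_INR.
  apply Rmult_le_compat_l; [apply pow_le, pos_INR|]. apply pow_incr.
  rewrite !Rabs_pos_eq; unfold s; lra.
Qed.

Lemma is_series_one_minus_mult (u : nat -> R) t L D :
  is_series (fun n => u n * t ^ n) L ->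
  is_series (fun n => (u (S n) - u n) * t ^ n) D ->
  (1 - t) * L = u 0%nat + t * D.
Proof.
  intros HL HD.
  assert (Htail : is_series (fun n => u (S n) * t ^ S n) (L - u 0%nat)).
  { apply (is_series_incr_1 (fun n => u n * t ^ n)).
    replace L with (L - u 0%nat + u 0%nat * t ^ 0) in HL by (simpl; ring).
    exact HL. }
  assert (HtD : is_series (fun n => t * ((u (S n) - u n) * t ^ n)) (L - u 0%nat - t * L)).
  { eapply is_series_ext;
      [|exact (is_series_minus _ _ _ _ Htail (@is_series_scal R_AbsRing R_NormedModule t _ _ HL))].
    intro n. change (u (S n) * t ^ S n - t * (u n * t ^ n) = t * ((u (S n) - u n) * t ^ n)).
    simpl. ring. }
  pose proof (is_series_unique _ _ HtD) as E1.
  pose proof (is_series_unique _ _ (@is_series_scal R_AbsRing R_NormedModule t _ _ HD)) as E2.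
  change scal with Rmult in E2. lra.
Qed.

Definition series_pow_geom (k : nat) (t : R) : R := Series (fun n => INR (S n) ^ k * t ^ n).

(* Closed forms of [sum_(n >= 2) n^2 t^(n-1)] and [sum_(n >= 2) n^2 (n-1) t^(n-1)]. *)
Definition deriv_majorant (t : R) : R := (1 + t) / (1 - t) ^ 3 - 1.
Definition zderiv2_majorant (t : R) : R := t * (4 + 2 * t) / (1 - t) ^ 4.

Section PowGeomSums.
Variable t : R.
Hypothesis Ht : 0 <= t < 1.

Lemma is_series_pow_geom k : is_series (fun n => INR (S n) ^ k * t ^ n) (series_pow_geom k t).
Proof. apply Series_correct, ex_series_pow_geom, Ht. Qed.

Lemma series_pow_geom_0 : series_pow_geom 0 t = / (1 - t).
Proof.
  apply is_series_unique. eapply is_series_ext; [|apply is_series_geom].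
  - intro n. simpl. ring.
  - rewrite Rabs_pos_eq; lra.
Qed.

Lemma series_pow_geom_rec k c2 c1 c0 :
  (forall n, INR (S (S n)) ^ k - INR (S n) ^ k = c2 * INR (S n) ^ 2 + c1 * INR (S n) + c0) ->
  (1 - t) * series_pow_geom k t
  = 1 + t * (c2 * series_pow_geom 2 t + c1 * series_pow_geom 1 t + c0 * series_pow_geom 0 t).
Proof.
  intros Hdiff.
  assert (HD : is_series (fun n => (INR (S (S n)) ^ k - INR (S n) ^ k) * t ^ n)
     (c2 * series_pow_geom 2 t + c1 * series_pow_geom 1 t + c0 * series_pow_geom 0 t)).
  { pose proof (fun k c => @is_series_scal R_AbsRing R_NormedModule c _ _ (is_series_pow_geom k)) as Hs.
    eapply is_series_ext;
      [|exact (is_series_plus _ _ _ _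
                (is_series_plus _ _ _ _ (Hs 2%nat c2) (Hs 1%nat c1)) (Hs 0%nat c0))].
    intro n. rewrite Hdiff.
    change (c2 * (INR (S n) ^ 2 * t ^ n) + c1 * (INR (S n) ^ 1 * t ^ n) + c0 * (INR (S n) ^ 0 * t ^ n)
      = (c2 * INR (S n) ^ 2 + c1 * INR (S n) + c0) * t ^ n). ring. }
  rewrite (is_series_one_minus_mult (fun n => INR (S n) ^ k) t _ _ (is_series_pow_geom k) HD).
  simpl. rewrite pow1. ring.
Qed.

Lemma series_pow_geom_1 : series_pow_geom 1 t = / (1 - t) ^ 2.
Proof.
  pose proof (series_pow_geom_rec 1 0 0 1 ltac:(intro n; rewrite (S_INR (S n)); ring)) as H.
  rewrite series_pow_geom_0 in H. apply Rmult_eq_reg_l with (1 - t); [rewrite H; field|]; lra.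
Qed.

Lemma series_pow_geom_2 : series_pow_geom 2 t = (1 + t) / (1 - t) ^ 3.
Proof.
  pose proof (series_pow_geom_rec 2 0 2 1 ltac:(intro n; rewrite (S_INR (S n)); ring)) as H.
  rewrite series_pow_geom_0, series_pow_geom_1 in H.
  apply Rmult_eq_reg_l with (1 - t); [rewrite H; field|]; lra.
Qed.

Lemma series_pow_geom_3 : series_pow_geom 3 t = (1 + 4 * t + t ^ 2) / (1 - t) ^ 4.
Proof.
  pose proof (series_pow_geom_rec 3 3 3 1 ltac:(intro n; rewrite (S_INR (S n)); ring)) as H.
  rewrite series_pow_geom_0, series_pow_geom_1, series_pow_geom_2 in H.
  apply Rmult_eq_reg_l with (1 - t); [rewrite H; field|]; lra.
Qed.

Lemma is_series_deriv_majorant :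
  is_series (fun n => INR (S (S n)) ^ 2 * t ^ S n) (deriv_majorant t).
Proof.
  pose proof (is_series_pow_geom 2) as H. rewrite series_pow_geom_2 in H.
  apply (is_series_incr_1 (fun n => INR (S n) ^ 2 * t ^ n)).
  unfold deriv_majorant.
  replace (plus _ _) with ((1 + t) / (1 - t) ^ 3) by (change plus with Rplus; simpl; ring).
  exact H.
Qed.

Lemma is_series_zderiv2_majorant :
  is_series (fun n => INR (S n) * INR (S (S n)) ^ 2 * t ^ S n) (zderiv2_majorant t).
Proof.
  assert (H : is_series (fun n => INR n * INR (S n) ^ 2 * t ^ n)
                (series_pow_geom 3 t - series_pow_geom 2 t)).
  { eapply is_series_ext;
      [|exact (is_series_minus _ _ _ _ (is_series_pow_geom 3) (is_series_pow_geom 2))].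
    intro n. change (INR (S n) ^ 3 * t ^ n - INR (S n) ^ 2 * t ^ n = INR n * INR (S n) ^ 2 * t ^ n).
    rewrite S_INR. ring. }
  apply (is_series_incr_1 (fun n => INR n * INR (S n) ^ 2 * t ^ n)).
  replace (plus _ _) with (series_pow_geom 3 t - series_pow_geom 2 t); [exact H|change plus with Rplus].
  rewrite series_pow_geom_3, series_pow_geom_2. unfold zderiv2_majorant. simpl. field. lra.
Qed.

End PowGeomSums.

Notation is_Cseries u l := (@is_series C_AbsRing C_NormedModule u l).

Lemma Cmod_sum_n_le (u : nat -> C) (v : nat -> R) :
  (forall n, Cmod (u n) <= v n) -> forall N, Cmod (sum_n u N) <= sum_n v N.
Proof.
  intros H N. induction N as [|N IH].
  - rewrite !sum_O. apply H.
  - rewrite !sum_Sn. eapply Rle_trans; [apply Cmod_triangle|].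
    change (plus (sum_n v N) (v (S N))) with (sum_n v N + v (S N)).
    apply Rplus_le_compat; auto.
Qed.

Lemma is_Cseries_Cmod_le (u : nat -> C) (v : nat -> R) L M :
  is_Cseries u L -> is_series v M -> (forall n, Cmod (u n) <= v n) -> Cmod L <= M.
Proof.
  intros HL HM Hle.
  assert (HnL : is_lim_seq (fun N => Cmod (sum_n u N)) (Cmod L)).
  { exact (filterlim_comp _ _ _ (sum_n u) norm _ _ _ HL
             (@filterlim_norm C_AbsRing C_NormedModule L)). }
  exact (is_lim_seq_le _ _ _ _ (Cmod_sum_n_le u v Hle) HnL (HM : is_lim_seq (sum_n v) M)).
Qed.

Lemma sum_n_RtoC (v : nat -> R) N : sum_n (fun n => RtoC (v n)) N = RtoC (sum_n v N).
Proof.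
  induction N as [|N IH].
  - rewrite !sum_O. reflexivity.
  - rewrite !sum_Sn, IH. symmetry. apply RtoC_plus.
Qed.

Lemma is_Cseries_RtoC (v : nat -> R) M : is_series v M -> is_Cseries (fun n => RtoC (v n)) (RtoC M).
Proof.
  intros H. apply filterlim_locally_ball_norm. intro eps.
  eapply filter_imp; [|exact (proj1 (filterlim_locally_ball_norm _ _) H eps)].
  intros N HN. unfold ball_norm in *. rewrite sum_n_RtoC.
  change (Cmod (Cminus (RtoC (sum_n v N)) (RtoC M)) < eps).
  rewrite <- RtoC_minus, Cmod_R. exact HN.
Qed.

Lemma is_Cseries_unique u l1 l2 : is_Cseries u l1 -> is_Cseries u l2 -> l1 = l2.
Proof.
  exact (@filterlim_locally_unique nat C_AbsRing C_NormedModule eventually _ _ _ _).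
Qed.

Lemma is_Cseries_tail u L : is_Cseries u L -> is_Cseries (fun n => u (S n)) (Cminus L (u 0%nat)).
Proof.
  intros H. apply (is_series_incr_1 u).
  assert (E : @plus C_NormedModule (Cminus L (u 0%nat)) (u 0%nat) = L).
  { change (Cplus (Cminus L (u 0%nat)) (u 0%nat) = L). ring. }
  rewrite E. exact H.
Qed.

(* Coquelicot's [Series] is only defined on [R]; over [C] we pick the sum by choice. *)
Definition Cseries (u : nat -> C) : C := epsilon (inhabits (RtoC 0)) (fun l => is_Cseries u l).

Lemma Cseries_correct u : (exists l, is_Cseries u l) -> is_Cseries u (Cseries u).
Proof. apply epsilon_spec. Qed.

Lemma is_C_derive_of_quadratic_rem (F : C -> C) z L K d : 0 < d ->
  (forall w, Cmod (Cminus w z) < d ->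
     Cmod (Cminus (Cminus (F w) (F z)) (Cmult (Cminus w z) L)) <= K * Cmod (Cminus w z) ^ 2) ->
  @is_derive C_AbsRing C_NormedModule F z L.
Proof.
  intros Hd Hrem. split; [apply is_linear_scal_l|].
  intros x Hx. apply (@is_filter_lim_locally_unique C_AbsRing (AbsRing_NormedModule C_AbsRing)) in Hx.
  subst x. intro eps.
  set (K' := Rabs K + 1).
  assert (HK' : 0 < K') by (unfold K'; pose proof (Rabs_pos K); lra).
  assert (Hdelta : 0 < Rmin d (eps / K'))
    by (apply Rmin_pos; [lra|apply Rdiv_lt_0_compat; [apply cond_pos|lra]]).
  apply filter_imp with (@ball_norm C_AbsRing (AbsRing_NormedModule C_AbsRing) z (mkposreal _ Hdelta));
    [|apply (@locally_ball_norm C_AbsRing (AbsRing_NormedModule C_AbsRing))].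
  intros w Hw. unfold ball_norm in Hw. simpl in Hw.
  change (Cmod (Cminus w z) < Rmin d (eps / K')) in Hw.
  change (Cmod (Cminus (Cminus (F w) (F z)) (Cmult (Cminus w z) L)) <= eps * Cmod (Cminus w z)).
  set (h := Cmod (Cminus w z)) in *.
  assert (Hh : 0 <= h) by apply Cmod_ge_0.
  assert (HhK : h * K' <= eps).
  { pose proof (Rmin_r d (eps / K')). apply Rmult_le_reg_r with (/ K');
      [apply Rinv_0_lt_compat; lra|].
    replace (h * K' * / K') with h by (field; lra). unfold Rdiv in *. lra. }
  apply Rle_trans with (K * h ^ 2).
  { apply Hrem. change (h < d). pose proof (Rmin_l d (eps / K')). lra. }
  assert (K <= K') by (unfold K'; pose proof (Rle_abs K); lra).
  assert (K * h ^ 2 <= K' * h ^ 2) by (apply Rmult_le_compat_r; [apply pow2_ge_0|lra]).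
  assert (K' * h ^ 2 <= eps * h)
    by (replace (K' * h ^ 2) with ((h * K') * h) by ring; apply Rmult_le_compat_r; lra).
  lra.
Qed.

Definition pow_taylor_rem (w z : C) (n : nat) : C :=
  Cminus (Cminus (Cpow w n) (Cpow z n))
         (Cmult (Cmult (RtoC (INR n)) (Cminus w z)) (Cpow z (pred n))).

Lemma pow_taylor_rem_S w z n : pow_taylor_rem w z (S n) =
  Cplus (Cmult w (pow_taylor_rem w z n))
        (Cmult (Cmult (RtoC (INR n)) (Cmult (Cminus w z) (Cminus w z))) (Cpow z (pred n))).
Proof.
  unfold pow_taylor_rem. destruct n.
  - simpl. ring.
  - rewrite (S_INR (S n)), RtoC_plus. simpl pred. simpl Cpow. ring.
Qed.

Lemma pow_taylor_rem_bound w z r n : 0 < r -> Cmod w <= r -> Cmod z <= r ->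
  r ^ 2 * Cmod (pow_taylor_rem w z n) <= INR n ^ 2 * Cmod (Cminus w z) ^ 2 * r ^ n.
Proof.
  intros Hr Hw Hz. set (h := Cmod (Cminus w z)).
  assert (Hh : 0 <= h) by apply Cmod_ge_0.
  induction n as [|n IH].
  - unfold pow_taylor_rem. simpl.
    replace (Cminus (Cminus 1 1) (Cmult (Cmult (RtoC 0) (Cminus w z)) 1)) with (RtoC 0) by ring.
    rewrite Cmod_0. lra.
  - rewrite pow_taylor_rem_S.
    assert (Hn : 0 <= INR n) by apply pos_INR.
    assert (Hrn : 0 <= r ^ n) by (apply pow_le; lra).
    assert (HE : 0 <= Cmod (pow_taylor_rem w z n)) by apply Cmod_ge_0.
    assert (Hzn : r ^ 2 * (INR n * Cmod z ^ pred n) <= INR n * r ^ S n).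
    { destruct n as [|m]; [simpl; lra|].
      simpl pred. replace (r ^ S (S m)) with (r ^ 2 * r ^ m) by (simpl; ring).
      assert (Cmod z ^ m <= r ^ m) by (apply pow_incr; split; [apply Cmod_ge_0|auto]).
      assert (Hc : 0 <= r ^ 2 * INR (S m)) by (apply Rmult_le_pos; [apply pow2_ge_0|apply pos_INR]).
      pose proof (Rmult_le_compat_l _ _ _ Hc H). lra. }
    assert (Hterm : Cmod (Cplus (Cmult w (pow_taylor_rem w z n))
        (Cmult (Cmult (RtoC (INR n)) (Cmult (Cminus w z) (Cminus w z))) (Cpow z (pred n))))
        <= Cmod w * Cmod (pow_taylor_rem w z n) + h ^ 2 * (INR n * Cmod z ^ pred n)).
    { eapply Rle_trans; [apply Cmod_triangle|].
      rewrite !Cmod_mult, Cmod_R, Rabs_pos_eq, Cmod_pow by exact Hn. fold h. lra. }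
    assert (Hw' : r ^ 2 * (Cmod w * Cmod (pow_taylor_rem w z n)) <= r * (INR n ^ 2 * h ^ 2 * r ^ n)).
    { apply Rle_trans with (r * (r ^ 2 * Cmod (pow_taylor_rem w z n))).
      - replace (r ^ 2 * (Cmod w * Cmod (pow_taylor_rem w z n)))
          with (Cmod w * (r ^ 2 * Cmod (pow_taylor_rem w z n))) by ring.
        apply Rmult_le_compat_r; [apply Rmult_le_pos; [apply pow2_ge_0|exact HE]|exact Hw].
      - apply Rmult_le_compat_l; [lra|exact IH]. }
    pose proof (Rmult_le_compat_l _ _ _ (pow2_ge_0 h) Hzn) as Hz'.
    assert (Hrest : 0 <= (INR n + 1) * h ^ 2 * r ^ S n)
      by (apply Rmult_le_pos; [apply Rmult_le_pos; [lra|apply pow2_ge_0]|apply pow_le; lra]).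
    apply Rle_trans
      with (r ^ 2 * (Cmod w * Cmod (pow_taylor_rem w z n) + h ^ 2 * (INR n * Cmod z ^ pred n))).
    + apply Rmult_le_compat_l; [apply pow2_ge_0|exact Hterm].
    + rewrite S_INR. replace (r ^ S n) with (r * r ^ n) in * by reflexivity. nra.
Qed.

Definition pow_bounded (a : nat -> C) (k : nat) (M : R) : Prop :=
  forall n, Cmod (a n) <= M * INR (S n) ^ k.

Definition deriv_coef (a : nat -> C) (n : nat) : C := Cmult (RtoC (INR (S n))) (a (S n)).

Lemma pow_bounded_ge0 a k M : pow_bounded a k M -> 0 <= M.
Proof.
  intros Ha. pose proof (Ha 0%nat) as H0. rewrite (S_INR 0), INR_0, Rplus_0_l, pow1 in H0.
  pose proof (Cmod_ge_0 (a 0%nat)). lra.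
Qed.

Lemma pow_bounded_deriv_coef a k M :
  pow_bounded a k M -> pow_bounded (deriv_coef a) (S k) (2 ^ k * M).
Proof.
  intros Ha n. pose proof (pow_bounded_ge0 a k M Ha) as HM.
  unfold deriv_coef. rewrite Cmod_mult, Cmod_R, Rabs_pos_eq by apply pos_INR.
  assert (H2 : INR (S (S n)) ^ k <= 2 ^ k * INR (S n) ^ k).
  { rewrite <- Rpow_mult_distr. apply pow_incr. rewrite (S_INR (S n)).
    pose proof (INR_S_ge1 n). lra. }
  apply Rle_trans with (INR (S n) * (M * INR (S (S n)) ^ k)).
  - apply Rmult_le_compat_l; [apply pos_INR|apply Ha].
  - change (INR (S n) ^ S k) with (INR (S n) * INR (S n) ^ k).
    pose proof (Rmult_le_compat_l _ _ _ (Rmult_le_pos _ _ (pos_INR (S n)) HM) H2). lra.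
Qed.

Lemma ex_Cseries_pser (a : nat -> C) k M : pow_bounded a k M ->
  forall z, Cmod z < 1 -> exists l, is_Cseries (fun n => Cmult (a n) (Cpow z n)) l.
Proof.
  intros Ha z Hz.
  apply (@ex_series_le C_AbsRing C_CompleteNormedModule _ (fun n => M * (INR (S n) ^ k * Cmod z ^ n))).
  - intro n. change (Cmod (Cmult (a n) (Cpow z n)) <= M * (INR (S n) ^ k * Cmod z ^ n)).
    rewrite Cmod_mult, Cmod_pow, <- Rmult_assoc.
    apply Rmult_le_compat_r; [apply pow_le, Cmod_ge_0|auto].
  - apply (@ex_series_scal R_AbsRing R_NormedModule), ex_series_pow_geom.
    split; [apply Cmod_ge_0|auto].
Qed.

Section PowerSeriesDerivative.
Variables (a : nat -> C) (k : nat) (M : R) (F G : C -> C).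
Hypothesis Ha : pow_bounded a k M.
Hypothesis HF : forall z, Cmod z < 1 -> is_Cseries (fun n => Cmult (a n) (Cpow z n)) (F z).
Hypothesis HG : forall z, Cmod z < 1 ->
  is_Cseries (fun n => Cmult (deriv_coef a n) (Cpow z n)) (G z).

Lemma is_Cseries_pser_taylor_rem w z : Cmod w < 1 -> Cmod z < 1 ->
  is_Cseries (fun n => Cmult (a n) (pow_taylor_rem w z n))
             (Cminus (Cminus (F w) (F z)) (Cmult (Cminus w z) (G z))).
Proof.
  intros Hw Hz.
  assert (HG' : is_Cseries (fun n => Cmult (Cmult (RtoC (INR n)) (a n)) (Cpow z (pred n))) (G z)).
  { apply is_series_decr_1.
    assert (E : @plus C_NormedModule (G z) (@opp C_NormedModule
                  (Cmult (Cmult (RtoC (INR 0)) (a 0%nat)) (Cpow z (pred 0)))) = G z).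
    { change (Cplus (G z) (Copp (Cmult (Cmult (RtoC 0) (a 0%nat)) (Cpow z 0))) = G z). ring. }
    rewrite E. exact (HG z Hz). }
  eapply is_series_ext; [|exact (is_series_minus _ _ _ _ (is_series_minus _ _ _ _ (HF w Hw) (HF z Hz))
                                   (is_series_scal (Cminus w z) _ _ HG'))].
  intro n. unfold pow_taylor_rem.
  change (Cminus (Cminus (Cmult (a n) (Cpow w n)) (Cmult (a n) (Cpow z n)))
           (Cmult (Cminus w z) (Cmult (Cmult (RtoC (INR n)) (a n)) (Cpow z (pred n))))
          = Cmult (a n) (Cminus (Cminus (Cpow w n) (Cpow z n))
               (Cmult (Cmult (RtoC (INR n)) (Cminus w z)) (Cpow z (pred n))))).
  ring.
Qed.

Lemma Cmod_pser_taylor_rem_le w z r : 0 < r < 1 -> Cmod w <= r -> Cmod z <= r ->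
  Cmod (Cminus (Cminus (F w) (F z)) (Cmult (Cminus w z) (G z)))
  <= M * series_pow_geom (k + 2) r / r ^ 2 * Cmod (Cminus w z) ^ 2.
Proof.
  intros Hr Hw Hz. set (h := Cmod (Cminus w z)).
  pose proof (pow_bounded_ge0 a k M Ha) as HM.
  assert (Hr2 : 0 < r ^ 2) by (apply pow_lt; lra).
  set (c := M * h ^ 2 / r ^ 2).
  assert (Hc : 0 <= c) by (unfold c; apply Rmult_le_pos;
    [apply Rmult_le_pos; [|apply pow2_ge_0]|apply Rlt_le, Rinv_0_lt_compat]; lra).
  apply Rle_trans with (c * series_pow_geom (k + 2) r); [|unfold c; right; field; lra].
  apply (is_Cseries_Cmod_le _ _ _ _ (is_Cseries_pser_taylor_rem w z ltac:(lra) ltac:(lra))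
           (@is_series_scal R_AbsRing R_NormedModule c _ _ (is_series_pow_geom r ltac:(lra) (k + 2)))).
  intro n. change (Cmod (Cmult (a n) (pow_taylor_rem w z n)) <= c * (INR (S n) ^ (k + 2) * r ^ n)).
  rewrite Cmod_mult.
  assert (HE : r ^ 2 * Cmod (pow_taylor_rem w z n) <= INR n ^ 2 * h ^ 2 * r ^ n)
    by (apply pow_taylor_rem_bound; lra).
  assert (Hn : INR n ^ 2 <= INR (S n) ^ 2)
    by (apply pow_incr; split; [apply pos_INR|apply le_INR; lia]).
  assert (Hk : 0 <= INR (S n) ^ k) by (apply pow_le, pos_INR).
  assert (Hrn : 0 <= r ^ n) by (apply pow_le; lra).
  rewrite pow_add.
  apply Rmult_le_reg_l with (r ^ 2); [exact Hr2|].
  replace (r ^ 2 * (c * (INR (S n) ^ k * INR (S n) ^ 2 * r ^ n)))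
    with ((M * INR (S n) ^ k) * (INR (S n) ^ 2 * h ^ 2 * r ^ n)) by (unfold c; field; lra).
  replace (r ^ 2 * (Cmod (a n) * Cmod (pow_taylor_rem w z n)))
    with (Cmod (a n) * (r ^ 2 * Cmod (pow_taylor_rem w z n))) by ring.
  apply Rmult_le_compat;
    [apply Cmod_ge_0|apply Rmult_le_pos; [apply pow2_ge_0|apply Cmod_ge_0]|apply Ha|].
  apply Rle_trans with (INR n ^ 2 * h ^ 2 * r ^ n); [exact HE|].
  apply Rmult_le_compat_r; [exact Hrn|]. apply Rmult_le_compat_r; [apply pow2_ge_0|exact Hn].
Qed.

Lemma is_derive_pser z : Cmod z < 1 -> @is_derive C_AbsRing C_NormedModule F z (G z).
Proof.
  intros Hz. pose proof (Cmod_ge_0 z). set (r := (1 + Cmod z) / 2).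
  apply (is_C_derive_of_quadratic_rem F z (G z) (M * series_pow_geom (k + 2) r / r ^ 2) (r - Cmod z));
    [unfold r; lra|].
  intros w Hw. apply Cmod_pser_taylor_rem_le; [unfold r; lra| |unfold r; lra].
  replace w with (Cplus z (Cminus w z)) by ring.
  pose proof (Cmod_triangle z (Cminus w z)). lra.
Qed.

End PowerSeriesDerivative.

Definition pser (a : nat -> C) (z : C) : C := Cseries (fun n => Cmult (a n) (Cpow z n)).

Lemma is_Cseries_pser a k M z : pow_bounded a k M -> Cmod z < 1 ->
  is_Cseries (fun n => Cmult (a n) (Cpow z n)) (pser a z).
Proof. intros Ha Hz. apply Cseries_correct. exact (ex_Cseries_pser a k M Ha z Hz). Qed.

Lemma derivs_pser a k M : pow_bounded a k M ->
  derivs (pser a) (pser (deriv_coef a)) (pser (deriv_coef (deriv_coef a))).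
Proof.
  intros Ha. pose proof (pow_bounded_deriv_coef _ _ _ Ha) as Ha'.
  pose proof (pow_bounded_deriv_coef _ _ _ Ha') as Ha''.
  intros z Hz. split.
  - exact (is_derive_pser a k M _ _ Ha (fun w => is_Cseries_pser a k M w Ha)
             (fun w => is_Cseries_pser _ _ _ w Ha') z Hz).
  - exact (is_derive_pser _ _ _ _ _ Ha' (fun w => is_Cseries_pser _ _ _ w Ha')
             (fun w => is_Cseries_pser _ _ _ w Ha'') z Hz).
Qed.

Lemma locally_unit_disk z :
  Cmod z < 1 -> @locally (AbsRing_UniformSpace C_AbsRing) z (fun w => Cmod w < 1).
Proof.
  intros Hz. assert (Hd : 0 < 1 - Cmod z) by lra.
  apply filter_imp with (@ball_norm C_AbsRing (AbsRing_NormedModule C_AbsRing) z (mkposreal _ Hd));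
    [|apply (@locally_ball_norm C_AbsRing (AbsRing_NormedModule C_AbsRing))].
  intros w Hw. unfold ball_norm in Hw. simpl in Hw. change (Cmod (Cminus w z) < 1 - Cmod z) in Hw.
  replace w with (Cplus z (Cminus w z)) by ring.
  pose proof (Cmod_triangle z (Cminus w z)). lra.
Qed.

Lemma derivs_eq_on_disk f f1 f2 g g1 g2 :
  (forall z, Cmod z < 1 -> f z = g z) -> derivs f f1 f2 -> derivs g g1 g2 ->
  forall z, Cmod z < 1 -> f1 z = g1 z /\ f2 z = g2 z.
Proof.
  intros Hfg Hf Hg.
  assert (Hderiv : forall (u v : C -> C) du dv, (forall z, Cmod z < 1 -> u z = v z) ->
    (forall z, Cmod z < 1 -> @is_derive C_AbsRing C_NormedModule u z (du z)) ->
    (forall z, Cmod z < 1 -> @is_derive C_AbsRing C_NormedModule v z (dv z)) ->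
    forall z, Cmod z < 1 -> du z = dv z).
  { intros u v du dv Huv Hu Hv z Hz.
    assert (Hu' : @is_derive C_AbsRing C_NormedModule v z (du z)).
    { apply (is_derive_ext_loc u); [|exact (Hu z Hz)].
      exact (filter_imp _ _ Huv (locally_unit_disk z Hz)). }
    rewrite <- (is_C_derive_unique _ _ _ Hu'). exact (is_C_derive_unique _ _ _ (Hv z Hz)). }
  assert (H1 : forall z, Cmod z < 1 -> f1 z = g1 z)
    by (apply (Hderiv f g); [exact Hfg|intros; apply Hf|intros; apply Hg]; assumption).
  intros z Hz. split; [exact (H1 z Hz)|].
  apply (Hderiv f1 g1); [exact H1|intros; apply Hf|intros; apply Hg|]; assumption.
Qed.

Lemma RtoC_pow t n : Cpow (RtoC t) n = RtoC (t ^ n).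
Proof. induction n as [|n IH]; [reflexivity|]. simpl. rewrite IH, RtoC_mult. reflexivity. Qed.

Lemma Cmod_RtoC_mult x y : 0 <= x -> Cmod (Cmult (RtoC x) y) = x * Cmod y.
Proof. intros. rewrite Cmod_mult, Cmod_R, Rabs_pos_eq; auto. Qed.

Lemma Cmod_sub_1_ge w : 1 - Cmod (Cminus w 1) <= Cmod w.
Proof.
  pose proof (Cmod_triangle (Cminus 1 w) w) as H.
  replace (Cplus (Cminus 1 w) w) with (RtoC 1) in H by ring.
  replace (Cminus 1 w) with (Copp (Cminus w 1)) in H by ring.
  rewrite Cmod_1, Cmod_opp in H. lra.
Qed.

Section ClassCoefficients.
Variable a : nat -> C.
Hypothesis Ha0 : a 0%nat = RtoC 0.
Hypothesis Ha1 : a 1%nat = RtoC 1.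
Hypothesis Han : forall n, (2 <= n)%nat -> Cmod (a n) <= INR n.

Lemma class_coef_le n : Cmod (a n) <= INR n.
Proof.
  destruct n as [|[|n]].
  - rewrite Ha0, Cmod_0. simpl; lra.
  - rewrite Ha1, Cmod_1. simpl; lra.
  - apply Han. lia.
Qed.

Lemma class_pow_bounded : pow_bounded a 1 1.
Proof.
  intro n. rewrite Rmult_1_l, pow_1. eapply Rle_trans; [apply class_coef_le|].
  apply le_INR. lia.
Qed.

Lemma Cmod_pser_deriv_sub_1_le z : Cmod z < 1 ->
  Cmod (Cminus (pser (deriv_coef a) z) 1) <= deriv_majorant (Cmod z).
Proof.
  intros Hz. set (t := Cmod z).
  assert (Ht : 0 <= t < 1) by (split; [apply Cmod_ge_0|auto]).
  pose proof (is_Cseries_tail _ _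
    (is_Cseries_pser _ _ _ z (pow_bounded_deriv_coef _ _ _ class_pow_bounded) Hz)) as Htail.
  cbv beta in Htail.
  replace (Cmult (deriv_coef a 0%nat) (Cpow z 0)) with (RtoC 1) in Htail
    by (unfold deriv_coef; rewrite Ha1; simpl; ring).
  apply (is_Cseries_Cmod_le _ _ _ _ Htail (is_series_deriv_majorant t Ht)).
  intro n. unfold deriv_coef.
  rewrite Cmod_mult, Cmod_RtoC_mult, Cmod_pow by apply pos_INR. fold t.
  apply Rmult_le_compat_r; [apply pow_le; lra|].
  apply Rmult_le_compat_l; [apply pos_INR|]. rewrite Rmult_1_r. apply class_coef_le.
Qed.

Lemma Cmod_z_pser_deriv2_le z : Cmod z < 1 ->
  Cmod (Cmult z (pser (deriv_coef (deriv_coef a)) z)) <= zderiv2_majorant (Cmod z).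
Proof.
  intros Hz. set (t := Cmod z).
  assert (Ht : 0 <= t < 1) by (split; [apply Cmod_ge_0|auto]).
  pose proof (pow_bounded_deriv_coef _ _ _ (pow_bounded_deriv_coef _ _ _ class_pow_bounded)) as Hb.
  pose proof (@is_series_scal C_AbsRing C_NormedModule z _ _ (is_Cseries_pser _ _ _ z Hb Hz)) as Hs.
  apply (is_Cseries_Cmod_le _ _ _ _ Hs (is_series_zderiv2_majorant t Ht)).
  intro n. change (Cmod (Cmult z (Cmult (deriv_coef (deriv_coef a) n) (Cpow z n)))
                   <= INR (S n) * INR (S (S n)) ^ 2 * t ^ S n).
  unfold deriv_coef. rewrite 2!Cmod_mult, 2!Cmod_RtoC_mult, Cmod_pow by apply pos_INR. fold t.
  pose proof (class_coef_le (S (S n))). pose proof (pos_INR (S n)). pose proof (pos_INR (S (S n))).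
  assert (Htn : 0 <= t ^ n) by (apply pow_le; lra).
  change (t ^ S n) with (t * t ^ n).
  assert (Hc : INR (S n) * (INR (S (S n)) * Cmod (a (S (S n)))) <= INR (S n) * INR (S (S n)) ^ 2).
  { apply Rmult_le_compat_l; [lra|].
    replace (INR (S (S n)) ^ 2) with (INR (S (S n)) * INR (S (S n))) by ring.
    apply Rmult_le_compat_l; lra. }
  pose proof (Rmult_le_compat_r _ _ _ (Rmult_le_pos _ _ (proj1 Ht) Htn) Hc). lra.
Qed.

End ClassCoefficients.

Lemma inF_deriv_bounds f f1 f2 : inF f -> derivs f f1 f2 -> forall z, Cmod z < 1 ->
  1 - deriv_majorant (Cmod z) <= Cmod (f1 z) /\
  Cmod (Cmult z (f2 z)) <= zderiv2_majorant (Cmod z).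
Proof.
  intros [a [Ha0 [Ha1 [Han Hser]]]] Hd z Hz.
  pose proof (class_pow_bounded a Ha0 Ha1 Han) as Hb.
  assert (Hf : forall w, Cmod w < 1 -> f w = pser a w)
    by (intros w Hw; exact (is_Cseries_unique _ _ _ (Hser w Hw) (is_Cseries_pser a 1 1 w Hb Hw))).
  destruct (derivs_eq_on_disk _ _ _ _ _ _ Hf Hd (derivs_pser a 1 1 Hb) z Hz) as [-> ->].
  split.
  - pose proof (Cmod_pser_deriv_sub_1_le a Ha0 Ha1 Han z Hz).
    pose proof (Cmod_sub_1_ge (pser (deriv_coef a) z)). lra.
  - exact (Cmod_z_pser_deriv2_le a Ha0 Ha1 Han z Hz).
Qed.

(* The extremal function [2 z - z / (1 - z)^2 = z - sum_(n >= 2) n z^n]. *)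
Definition extremal_coef (n : nat) : C :=
  match n with 0%nat => RtoC 0 | 1%nat => RtoC 1 | _ => RtoC (- INR n) end.

Lemma extremal_coef_le n : (2 <= n)%nat -> Cmod (extremal_coef n) <= INR n.
Proof.
  intros Hn. destruct n as [|[|m]]; try lia. unfold extremal_coef.
  rewrite Cmod_R, Rabs_Ropp, Rabs_pos_eq by apply pos_INR. lra.
Qed.

Lemma extremal_pow_bounded : pow_bounded extremal_coef 1 1.
Proof. apply class_pow_bounded; [reflexivity|reflexivity|exact extremal_coef_le]. Qed.

Definition extremal : C -> C := pser extremal_coef.
Definition extremal' : C -> C := pser (deriv_coef extremal_coef).
Definition extremal'' : C -> C := pser (deriv_coef (deriv_coef extremal_coef)).

Lemma extremal_derivs : derivs extremal extremal' extremal''.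
Proof. exact (derivs_pser _ _ _ extremal_pow_bounded). Qed.

Lemma extremal_inF : inF extremal.
Proof.
  exists extremal_coef. repeat split; [exact extremal_coef_le|].
  intros z Hz. exact (is_Cseries_pser _ _ _ z extremal_pow_bounded Hz).
Qed.

Section ExtremalOnRadius.
Variable t : R.
Hypothesis Ht : 0 <= t < 1.

Lemma Cmod_RtoC_lt_1 : Cmod (RtoC t) < 1.
Proof. rewrite Cmod_R, Rabs_pos_eq; lra. Qed.

Lemma extremal'_real : extremal' (RtoC t) = RtoC (1 - deriv_majorant t).
Proof.
  pose proof (is_Cseries_tail _ _ (is_Cseries_pser _ _ _ _
    (pow_bounded_deriv_coef _ _ _ extremal_pow_bounded) Cmod_RtoC_lt_1)) as Htail.
  cbv beta in Htail.
  replace (Cmult (deriv_coef extremal_coef 0%nat) (Cpow (RtoC t) 0)) with (RtoC 1) in Htail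
    by (unfold deriv_coef; simpl; ring).
  assert (Hval : is_Cseries (fun n => Cmult (deriv_coef extremal_coef (S n)) (Cpow (RtoC t) (S n)))
                   (RtoC (- deriv_majorant t))).
  { eapply is_series_ext;
      [|exact (is_Cseries_RtoC _ _ (is_series_opp _ _ (is_series_deriv_majorant t Ht)))].
    intro n. change (RtoC (- (INR (S (S n)) ^ 2 * t ^ S n))
      = Cmult (Cmult (RtoC (INR (S (S n)))) (RtoC (- INR (S (S n))))) (Cpow (RtoC t) (S n))).
    rewrite RtoC_pow, <- !RtoC_mult. f_equal. ring. }
  pose proof (is_Cseries_unique _ _ _ Htail Hval) as E.
  unfold extremal'.
  replace (pser (deriv_coef extremal_coef) (RtoC t))
    with (Cplus (Cminus (pser (deriv_coef extremal_coef) (RtoC t)) (RtoC 1)) (RtoC 1)) by ring.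
  rewrite E, <- RtoC_plus. f_equal. ring.
Qed.

Lemma extremal''_real : Cmult (RtoC t) (extremal'' (RtoC t)) = RtoC (- zderiv2_majorant t).
Proof.
  pose proof (pow_bounded_deriv_coef _ _ _ (pow_bounded_deriv_coef _ _ _ extremal_pow_bounded)) as Hb.
  pose proof (@is_series_scal C_AbsRing C_NormedModule (RtoC t) _ _
                (is_Cseries_pser _ _ _ _ Hb Cmod_RtoC_lt_1)) as Hs.
  apply (is_Cseries_unique _ _ _ Hs).
  eapply is_series_ext;
    [|exact (is_Cseries_RtoC _ _ (is_series_opp _ _ (is_series_zderiv2_majorant t Ht)))].
  intro n. change (RtoC (- (INR (S n) * INR (S (S n)) ^ 2 * t ^ S n))
    = Cmult (RtoC t) (Cmult (Cmult (RtoC (INR (S n))) (Cmult (RtoC (INR (S (S n))))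
        (RtoC (- INR (S (S n)))))) (Cpow (RtoC t) n))).
  rewrite RtoC_pow, <- !RtoC_mult. f_equal. simpl (t ^ S n). ring.
Qed.

End ExtremalOnRadius.

Definition r0_poly (alpha t : R) : R :=
  2 * (1 - alpha) * (1 - t) ^ 4 - (1 - alpha + 4 * t + (1 + alpha) * t ^ 2).

Lemma r0_eq_iff alpha r : r0_eq alpha r <-> r0_poly alpha r = 0.
Proof. unfold r0_eq, r0_poly. split; intros; lra. Qed.

Lemma r0_poly_decreasing alpha s t : 0 <= alpha < 1 -> 0 <= s < t -> t <= 1 ->
  r0_poly alpha t < r0_poly alpha s.
Proof.
  intros Ha Hs Ht. unfold r0_poly.
  assert ((1 - t) ^ 4 <= (1 - s) ^ 4) by (apply pow_incr; lra).
  assert (s ^ 2 <= t ^ 2) by (apply pow_incr; lra).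
  assert (2 * (1 - alpha) * (1 - t) ^ 4 <= 2 * (1 - alpha) * (1 - s) ^ 4)
    by (apply Rmult_le_compat_l; lra).
  assert ((1 + alpha) * s ^ 2 <= (1 + alpha) * t ^ 2) by (apply Rmult_le_compat_l; lra).
  lra.
Qed.

Lemma ex_unique_r0 alpha : 0 <= alpha < 1 -> exists! r0, 0 < r0 < 1 /\ r0_eq alpha r0.
Proof.
  intros Ha.
  assert (Hc : continuity (fun t => - r0_poly alpha t)) by (unfold r0_poly; reg).
  destruct (IVT _ 0 1 Hc ltac:(lra) ltac:(unfold r0_poly; simpl; lra) ltac:(unfold r0_poly; simpl; lra))
    as [r [Hr Hroot]].
  assert (Hroot' : r0_poly alpha r = 0) by lra.
  assert (r <> 0) by (intros ->; unfold r0_poly in Hroot'; simpl in Hroot'; lra).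
  assert (r <> 1) by (intros ->; unfold r0_poly in Hroot'; simpl in Hroot'; lra).
  exists r. split; [split; [lra|apply r0_eq_iff; exact Hroot']|].
  intros r' [Hr' Heq]. apply r0_eq_iff in Heq.
  destruct (Rtotal_order r r') as [L|[L|L]]; [|exact L|].
  - pose proof (r0_poly_decreasing alpha r r' Ha ltac:(lra) ltac:(lra)). lra.
  - pose proof (r0_poly_decreasing alpha r' r Ha ltac:(lra) ltac:(lra)). lra.
Qed.

Definition majorant_ratio (t : R) : R := zderiv2_majorant t / (1 - deriv_majorant t).

Lemma one_plus_lt_two_cube t : 0 <= t <= 12 / 100 -> 1 + t < 2 * (1 - t) ^ 3.
Proof.
  intros Ht. assert ((88 / 100) ^ 3 <= (1 - t) ^ 3) by (apply pow_incr; lra). lra.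
Qed.

Lemma deriv_majorant_lt_1 t : 0 <= t <= 12 / 100 -> deriv_majorant t < 1.
Proof.
  intros Ht. pose proof (one_plus_lt_two_cube t Ht).
  assert (Hp : 0 < (1 - t) ^ 3) by (apply pow_lt; lra).
  unfold deriv_majorant. apply Rlt_minus_l, Rmult_lt_reg_r with ((1 - t) ^ 3); [exact Hp|].
  unfold Rdiv. rewrite Rmult_assoc, Rinv_l by lra. lra.
Qed.

Lemma one_minus_alpha_sub_majorant_ratio alpha t : 0 <= t <= 12 / 100 ->
  1 - alpha - majorant_ratio t = r0_poly alpha t / ((1 - t) ^ 4 * (1 - deriv_majorant t)).
Proof.
  intros Ht. pose proof (one_plus_lt_two_cube t Ht).
  unfold majorant_ratio, zderiv2_majorant, r0_poly, deriv_majorant.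
  field. split; lra.
Qed.

Lemma majorant_ratio_sign alpha t : 0 <= t <= 12 / 100 ->
  (0 <= r0_poly alpha t -> majorant_ratio t <= 1 - alpha) /\
  (0 < r0_poly alpha t -> majorant_ratio t < 1 - alpha) /\
  (r0_poly alpha t < 0 -> 1 - alpha < majorant_ratio t).
Proof.
  intros Ht. pose proof (one_minus_alpha_sub_majorant_ratio alpha t Ht) as E.
  assert (HD : 0 < (1 - t) ^ 4 * (1 - deriv_majorant t)).
  { apply Rmult_lt_0_compat; [apply pow_lt; lra|]. pose proof (deriv_majorant_lt_1 t Ht). lra. }
  split; [|split]; intros Hp.
  - assert (0 <= r0_poly alpha t / ((1 - t) ^ 4 * (1 - deriv_majorant t)))
      by (apply Rmult_le_pos; [exact Hp|apply Rlt_le, Rinv_0_lt_compat, HD]). lra.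
  - assert (0 < r0_poly alpha t / ((1 - t) ^ 4 * (1 - deriv_majorant t)))
      by (apply Rdiv_lt_0_compat; assumption). lra.
  - assert (0 < - r0_poly alpha t / ((1 - t) ^ 4 * (1 - deriv_majorant t)))
      by (apply Rdiv_lt_0_compat; lra).
    assert (- r0_poly alpha t / ((1 - t) ^ 4 * (1 - deriv_majorant t))
            = - (r0_poly alpha t / ((1 - t) ^ 4 * (1 - deriv_majorant t)))) by (unfold Rdiv; ring).
    lra.
Qed.

Lemma class_ratio_le f f1 f2 : inF f -> derivs f f1 f2 -> forall z, Cmod z <= 12 / 100 ->
  f1 z <> RtoC 0 /\ Cmod (Cdiv (Cmult z (f2 z)) (f1 z)) <= majorant_ratio (Cmod z).
Proof.
  intros Hf Hd z Hz. pose proof (Cmod_ge_0 z).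
  destruct (inF_deriv_bounds f f1 f2 Hf Hd z ltac:(lra)) as [B1 B2].
  pose proof (deriv_majorant_lt_1 (Cmod z) ltac:(lra)).
  assert (Hf1 : f1 z <> RtoC 0) by (intro E; rewrite E, Cmod_0 in B1; lra).
  split; [exact Hf1|]. rewrite Cmod_div by exact Hf1. unfold majorant_ratio, Rdiv.
  pose proof (Cmod_ge_0 (Cmult z (f2 z))).
  apply Rmult_le_compat; [lra|apply Rlt_le, Rinv_0_lt_compat; lra|exact B2|].
  apply Rinv_le_contravar; lra.
Qed.

Lemma extremal_ratio t : 0 <= t <= 12 / 100 ->
  extremal' (RtoC t) <> RtoC 0 /\
  Cdiv (Cmult (RtoC t) (extremal'' (RtoC t))) (extremal' (RtoC t)) = RtoC (- majorant_ratio t).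
Proof.
  intros Ht. pose proof (deriv_majorant_lt_1 t Ht).
  rewrite extremal'_real, extremal''_real by lra.
  split; [intro E; apply RtoC_inj in E; lra|].
  rewrite <- RtoC_div by lra. f_equal. unfold majorant_ratio. field. lra.
Qed.

Lemma Re_1_plus_ge w : 1 - Cmod w <= Re (Cplus (RtoC 1) w).
Proof.
  rewrite re_plus, re_RtoC. pose proof (re_le_Cmod w). pose proof (Rle_abs (- Re w)).
  rewrite Rabs_Ropp in *. lra.
Qed.

Lemma is_lub_threshold (P : R -> Prop) r0 : 0 < r0 <= 1 -> P r0 ->
  (forall r, r0 < r -> ~ P r) -> is_lub (fun r => 0 < r <= 1 /\ P r) r0.
Proof.
  intros Hr0 HP Hfail. split.
  - intros r [_ Hr]. destruct (Rle_lt_dec r r0) as [L|L]; [exact L|]. exfalso. exact (Hfail r L Hr).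
  - intros b Hb. apply Hb. split; assumption.
Qed.

Section RadiusR0.
Variables alpha r0 : R.
Hypothesis Halpha : 0 <= alpha < 1.
Hypothesis Hr0 : 0 < r0 < 1.
Hypothesis Hroot : r0_poly alpha r0 = 0.

Lemma r0_lt_tenth : r0 < 1 / 10.
Proof.
  destruct (Rlt_le_dec r0 (1 / 10)) as [L|L]; [exact L|]. exfalso.
  assert (r0_poly alpha (1 / 10) < 0) by (unfold r0_poly; simpl; nra).
  destruct (Req_dec r0 (1 / 10)) as [E|E]; [subst r0; lra|].
  pose proof (r0_poly_decreasing alpha (1 / 10) r0 Halpha ltac:(lra) ltac:(lra)). lra.
Qed.

Lemma r0_poly_nonneg t : 0 <= t <= r0 -> 0 <= r0_poly alpha t.
Proof.
  intros Ht. destruct (Req_dec t r0) as [->|E]; [lra|].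
  pose proof (r0_poly_decreasing alpha t r0 Halpha ltac:(lra) ltac:(lra)). lra.
Qed.

Lemma r0_poly_pos t : 0 <= t < r0 -> 0 < r0_poly alpha t.
Proof. intros Ht. pose proof (r0_poly_decreasing alpha t r0 Halpha ltac:(lra) ltac:(lra)). lra. Qed.

Lemma bound_on_closed_disk_r0 : bound_on_closed_disk alpha r0.
Proof.
  intros f f1 f2 Hf Hd z _ Hz. pose proof (Cmod_ge_0 z). pose proof r0_lt_tenth.
  destruct (class_ratio_le f f1 f2 Hf Hd z ltac:(lra)) as [Hf1 Hle].
  split; [exact Hf1|]. eapply Rle_trans; [exact Hle|].
  apply (majorant_ratio_sign alpha); [lra|]. apply r0_poly_nonneg. lra.
Qed.

Lemma class_ratio_lt_below_r0 f f1 f2 : inF f -> derivs f f1 f2 -> forall z, Cmod z < r0 ->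
  f1 z <> RtoC 0 /\ Cmod (Cdiv (Cmult z (f2 z)) (f1 z)) < 1 - alpha.
Proof.
  intros Hf Hd z Hz. pose proof (Cmod_ge_0 z). pose proof r0_lt_tenth.
  destruct (class_ratio_le f f1 f2 Hf Hd z ltac:(lra)) as [Hf1 Hle].
  split; [exact Hf1|]. eapply Rle_lt_trans; [exact Hle|].
  apply (majorant_ratio_sign alpha); [lra|]. apply r0_poly_pos. lra.
Qed.

Lemma convex_order_in_r0 : convex_order_in alpha r0.
Proof.
  intros f f1 f2 Hf Hd z Hz.
  destruct (class_ratio_lt_below_r0 f f1 f2 Hf Hd z Hz) as [Hf1 Hlt].
  split; [exact Hf1|]. pose proof (Re_1_plus_ge (Cdiv (Cmult z (f2 z)) (f1 z))). lra.
Qed.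

Lemma majorant_ratio_gt_beyond_r0 r : r0 < r ->
  exists t, r0 < t < r /\ t <= 12 / 100 /\ 1 - alpha < majorant_ratio t.
Proof.
  intros Hr. pose proof r0_lt_tenth.
  set (t := (r0 + Rmin r (12 / 100)) / 2).
  assert (r0 < Rmin r (12 / 100)) by (apply Rmin_glb_lt; lra).
  pose proof (Rmin_l r (12 / 100)). pose proof (Rmin_r r (12 / 100)).
  exists t. split; [unfold t; lra|]. split; [unfold t; lra|].
  apply (majorant_ratio_sign alpha); [unfold t; lra|].
  pose proof (r0_poly_decreasing alpha r0 t Halpha ltac:(unfold t; lra) ltac:(unfold t; lra)). lra.
Qed.

Lemma not_bound_on_closed_disk_beyond_r0 r : r0 < r -> ~ bound_on_closed_disk alpha r.
Proof.
  intros Hr Hb. destruct (majorant_ratio_gt_beyond_r0 r Hr) as [t [Ht [Ht' Hgt]]].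
  destruct (extremal_ratio t ltac:(lra)) as [_ E].
  assert (Hmod : Cmod (RtoC t) = t) by (rewrite Cmod_R, Rabs_pos_eq; lra).
  destruct (Hb _ _ _ extremal_inF extremal_derivs (RtoC t) ltac:(lra) ltac:(lra)) as [_ B].
  rewrite E, Cmod_R, Rabs_Ropp in B. pose proof (Rle_abs (majorant_ratio t)). lra.
Qed.

Lemma not_convex_order_in_beyond_r0 r : r0 < r -> ~ convex_order_in alpha r.
Proof.
  intros Hr Hc. destruct (majorant_ratio_gt_beyond_r0 r Hr) as [t [Ht [Ht' Hgt]]].
  destruct (extremal_ratio t ltac:(lra)) as [_ E].
  assert (Hmod : Cmod (RtoC t) = t) by (rewrite Cmod_R, Rabs_pos_eq; lra).
  destruct (Hc _ _ _ extremal_inF extremal_derivs (RtoC t) ltac:(lra)) as [_ B].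
  rewrite E, re_plus, !re_RtoC in B. lra.
Qed.

End RadiusR0.

Lemma unif_convex_in_r0 r0 : 0 < r0 < 1 -> r0_poly (1 / 2) r0 = 0 -> unif_convex_in r0.
Proof.
  intros Hr0 Hroot f f1 f2 Hf Hd z Hz.
  destruct (class_ratio_lt_below_r0 (1 / 2) r0 ltac:(lra) Hr0 Hroot f f1 f2 Hf Hd z Hz) as [Hf1 Hlt].
  split; [exact Hf1|]. pose proof (Re_1_plus_ge (Cdiv (Cmult z (f2 z)) (f1 z))). lra.
Qed.

Lemma not_unif_convex_in_beyond_r0 r0 : 0 < r0 < 1 -> r0_poly (1 / 2) r0 = 0 ->
  forall r, r0 < r -> ~ unif_convex_in r.
Proof.
  intros Hr0 Hroot r Hr Hc.
  destruct (majorant_ratio_gt_beyond_r0 (1 / 2) r0 ltac:(lra) Hr0 Hroot r Hr) as [t [Ht [Ht' Hgt]]].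
  destruct (extremal_ratio t ltac:(lra)) as [_ E].
  assert (Hmod : Cmod (RtoC t) = t) by (rewrite Cmod_R, Rabs_pos_eq; lra).
  destruct (Hc _ _ _ extremal_inF extremal_derivs (RtoC t) ltac:(lra)) as [_ B].
  rewrite E, re_plus, !re_RtoC, Cmod_R, Rabs_Ropp, Rabs_pos_eq in B; lra.
Qed.

Lemma r0_half_bounds r0 : 0 < r0 < 1 -> r0_poly (1 / 2) r0 = 0 ->
  647225 / 10000000 <= r0 < 647235 / 10000000.
Proof.
  intros Hr0 Hroot.
  assert (Hlo : 0 < r0_poly (1 / 2) (647225 / 10000000)) by (unfold r0_poly; simpl; lra).
  assert (Hhi : r0_poly (1 / 2) (647235 / 10000000) < 0) by (unfold r0_poly; simpl; lra).
  split.
  - destruct (Rle_lt_dec (647225 / 10000000) r0) as [L|L]; [exact L|].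
    pose proof (r0_poly_decreasing (1 / 2) r0 (647225 / 10000000) ltac:(lra) ltac:(lra) ltac:(lra)).
    lra.
  - destruct (Rlt_le_dec r0 (647235 / 10000000)) as [L|L]; [exact L|].
    destruct (Req_dec r0 (647235 / 10000000)) as [E|E]; [rewrite E in Hroot; lra|].
    pose proof (r0_poly_decreasing (1 / 2) (647235 / 10000000) r0 ltac:(lra) ltac:(lra) ltac:(lra)).
    lra.
Qed.

Theorem corollary3p2 :
  (forall alpha : R, 0 <= alpha < 1 ->
     (exists! r0 : R, 0 < r0 < 1 /\ r0_eq alpha r0) /\
     (forall r0 : R, 0 < r0 < 1 -> r0_eq alpha r0 ->
        bound_on_closed_disk alpha r0 /\
        (forall r : R, r0 < r -> ~ bound_on_closed_disk alpha r) /\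
        radius_convexity_order alpha r0)) /\
  (forall r0 : R, 0 < r0 < 1 -> r0_eq (1/2) r0 ->
     radius_uniform_convexity r0 /\ 647225 / 10000000 <= r0 < 647235 / 10000000).
Proof.
  split.
  - intros alpha Halpha. split; [exact (ex_unique_r0 alpha Halpha)|].
    intros r0 Hr0 Hroot. apply r0_eq_iff in Hroot. split; [|split].
    + exact (bound_on_closed_disk_r0 alpha r0 Halpha Hr0 Hroot).
    + exact (not_bound_on_closed_disk_beyond_r0 alpha r0 Halpha Hr0 Hroot).
    + apply is_lub_threshold; [lra|exact (convex_order_in_r0 alpha r0 Halpha Hr0 Hroot)|].
      exact (not_convex_order_in_beyond_r0 alpha r0 Halpha Hr0 Hroot).
  - intros r0 Hr0 Hroot. apply r0_eq_iff in Hroot. split.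
    + apply is_lub_threshold; [lra|exact (unif_convex_in_r0 r0 Hr0 Hroot)|].
      exact (not_unif_convex_in_beyond_r0 r0 Hr0 Hroot).
    + exact (r0_half_bounds r0 Hr0 Hroot).
Qed.
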